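(* Under the hypotheses of Theorem 1 (namely: $p$ positive, continuous, even on $(-1,1)$ with no nontrivial solution of $u''+pu=0$ having more than one zero in $(-1,1)$; $F$ the solution of $\mathcal{S}F=2p$ with $F(0)=0,F'(0)=1,F''(0)=0$; $\varphi:(-1,1)\to\mathbb{R}^n$ of class $C^3$ with $\varphi'\neq0$, $\varphi(0)=0$, $|\varphi'(0)|=1$, $\langle\varphi'(0),\varphi''(0)\rangle=0$, and $S_1\varphi\le 2p$ on $(-1,1)$), one has for all $x\in(-1,1)$ $$\frac{|\varphi(x)|}{|\varphi'(x)|^{1/2}}\ \ge\ \frac{|F(x)|}{F'(x)^{1/2}}.$$
   Context: For a real function $g$ with $g'\neq0$, $\mathcal{S}g=(g''/g')'-\tfrac12(g''/g')^2$. For a $C^3$ curve $\varphi$ into $\mathbb{R}^n$ with $\varphi'\neq0$, the Ahlfors Schwarzian is $S_1\varphi=\frac{\langle\varphi',\varphi'''\rangle}{|\varphi'|^2}-3\frac{\langle\varphi',\varphi''\rangle^2}{|\varphi'|^4}+\frac32\frac{|\varphi''|^2}{|\varphi'|^2}$, with Euclidean inner product and norm. *)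

From Stdlib Require Import Reals Lra List.
Open Scope R_scope.

Definition I1 (x : R) : Prop := -1 < x < 1.

(* vectors of R^n represented as nat -> R, only indices 0..n-1 matter *)
Definition inner (n : nat) (u v : nat -> R) : R :=
  fold_right Rplus 0 (map (fun i => u i * v i) (seq 0 n)).
Definition vnorm (n : nat) (u : nat -> R) : R := sqrt (inner n u u).

(* Ahlfors Schwarzian of a curve with derivative vectors d1, d2, d3 *)
Definition S1 (n : nat) (d1 d2 d3 : nat -> R) : R :=
  inner n d1 d3 / (vnorm n d1) ^ 2
  - 3 * (inner n d1 d2) ^ 2 / (vnorm n d1) ^ 4
  + 3 / 2 * (vnorm n d2) ^ 2 / (vnorm n d1) ^ 2.

Definition sol_on (p u u1 u2 : R -> R) : Prop :=
  forall x, I1 x ->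
    derivable_pt_lim u x (u1 x) /\ derivable_pt_lim u1 x (u2 x) /\
    u2 x + p x * u x = 0.

Definition disconjugate (p : R -> R) : Prop :=
  forall u u1 u2 : R -> R, sol_on p u u1 u2 ->
    (exists x, I1 x /\ u x <> 0) ->
    ~ (exists a b, I1 a /\ I1 b /\ a < b /\ u a = 0 /\ u b = 0).

(* Write G = |phi| / |phi'|^(1/2) and U = F / sqrt F'.  The Schwarzian equation S F = 2 p says
   exactly that U'' + p U = 0.  On the curve side, g = G'/G satisfies g^2 + g' + (S_1 phi)/2 >= 0,
   because the left side is a positive multiple of the squared norm of
   2 |phi'|^4 phi - (2 |phi'|^2 <phi,phi'> + |phi|^2 <phi',phi''>) phi' + |phi|^2 |phi'|^2 phi'';
   with S_1 phi <= 2 p this gives G'' + p G >= 0 wherever phi <> 0.  Both G and U behave like x as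
   x -> 0+, so the Wronskian G'U - GU' tends to 0 there and is nondecreasing; hence G/U is
   nondecreasing with limit 1 at 0+, i.e. G >= U.  A continuity argument shows that phi does not
   vanish on (0,1), and negative x reduce to positive ones through x |-> -x, under which all
   hypotheses are invariant because p is even. *)

From Stdlib Require Import Reals Lra Lia List Ranalysis5.
Open Scope R_scope.

(** * Finite sums and the Euclidean inner product *)

Definition rsum (l : list nat) (h : nat -> R) : R := fold_right Rplus 0 (map h l).

Lemma rsum_ext l h h' : (forall i, In i l -> h i = h' i) -> rsum l h = rsum l h'.
Proof.
  unfold rsum; induction l as [|i l IH]; intros Hh; simpl; [reflexivity|].
  rewrite Hh, IH; [reflexivity | intros; apply Hh | ]; simpl; auto.
Qed.

Lemma rsum_ge0 l h : (forall i, In i l -> 0 <= h i) -> 0 <= rsum l h.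
Proof.
  unfold rsum; induction l as [|i l IH]; intros Hh; simpl; [lra|].
  assert (0 <= h i) by (apply Hh; simpl; auto).
  assert (0 <= fold_right Rplus 0 (map h l)) by (apply IH; intros; apply Hh; simpl; auto).
  lra.
Qed.

Lemma rsum_add l h h' : rsum l (fun i => h i + h' i) = rsum l h + rsum l h'.
Proof. unfold rsum; induction l as [|i l IH]; simpl; [ring|]. rewrite IH; ring. Qed.

Lemma derivable_pt_lim_rsum l (h h' : nat -> R -> R) x :
  (forall i, In i l -> derivable_pt_lim (h i) x (h' i x)) ->
  derivable_pt_lim (fun t => rsum l (fun i => h i t)) x (rsum l (fun i => h' i x)).
Proof.
  unfold rsum; induction l as [|i l IH]; intros Hh; simpl.
  - apply derivable_pt_lim_const.
  - apply derivable_pt_lim_plus; [apply Hh | apply IH; intros; apply Hh]; simpl; auto.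
Qed.

Lemma inner_rsum n u v : inner n u v = rsum (seq 0 n) (fun i => u i * v i).
Proof. reflexivity. Qed.

Lemma inner_sym n u v : inner n u v = inner n v u.
Proof. rewrite !inner_rsum; apply rsum_ext; intros; ring. Qed.

Lemma inner_ge0 n u : 0 <= inner n u u.
Proof. rewrite inner_rsum; apply rsum_ge0; intros; nra. Qed.

Lemma inner_oppl n u v : inner n (fun i => - u i) v = - inner n u v.
Proof.
  rewrite !inner_rsum; unfold rsum; induction (seq 0 n); simpl; [ring|].
  rewrite IHl; ring.
Qed.

Lemma inner_oppr n u v : inner n u (fun i => - v i) = - inner n u v.
Proof. rewrite inner_sym, inner_oppl, inner_sym; reflexivity. Qed.

Lemma inner_opp n u v : inner n (fun i => - u i) (fun i => - v i) = inner n u v.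
Proof. rewrite inner_oppl, inner_oppr; ring. Qed.

Lemma inner_eq0l n u v : (forall i, (i < n)%nat -> u i = 0) -> inner n u v = 0.
Proof.
  intros Hu; rewrite inner_rsum, (rsum_ext _ _ (fun _ => 0)).
  - unfold rsum; induction (seq 0 n); simpl; [reflexivity|]; rewrite IHl; ring.
  - intros i Hi; apply in_seq in Hi; rewrite Hu by lia; ring.
Qed.

Lemma inner_comb3 n a b c x y z :
  inner n (fun i => x * a i + y * b i + z * c i) (fun i => x * a i + y * b i + z * c i) =
  x * x * inner n a a + y * y * inner n b b + z * z * inner n c c
  + 2 * x * y * inner n a b + 2 * x * z * inner n a c + 2 * y * z * inner n b c.
Proof.
  rewrite !inner_rsum; unfold rsum; induction (seq 0 n); simpl; [ring|].
  rewrite IHl; ring.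
Qed.

Lemma Cauchy_Schwarz n u v : 0 < inner n v v -> inner n u v ^ 2 <= inner n u u * inner n v v.
Proof.
  intros Hv.
  pose proof (inner_ge0 n (fun i => inner n v v * u i + (- inner n u v) * v i + 0 * v i)) as H.
  rewrite inner_comb3 in H; nra.
Qed.

Lemma vnorm_sqr n u : vnorm n u ^ 2 = inner n u u.
Proof. apply pow2_sqrt, inner_ge0. Qed.

Lemma vnorm_ge0 n u : 0 <= vnorm n u.
Proof. apply sqrt_pos. Qed.

Lemma vnorm_gt0 n u : 0 < inner n u u -> 0 < vnorm n u.
Proof. apply sqrt_lt_R0. Qed.

Lemma vnorm_opp n u : vnorm n (fun i => - u i) = vnorm n u.
Proof. unfold vnorm; rewrite inner_opp; reflexivity. Qed.

Lemma inner_pos_of_vnorm_neq0 n u : vnorm n u <> 0 -> 0 < inner n u u.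
Proof.
  intros Hu; destruct (inner_ge0 n u) as [| Hz]; [assumption|].
  exfalso; apply Hu; unfold vnorm; rewrite <- Hz; apply sqrt_0.
Qed.

(** * One-variable calculus and curves in R^n *)

Lemma derivable_pt_lim_val f x l l' : derivable_pt_lim f x l -> l = l' -> derivable_pt_lim f x l'.
Proof. now intros H <-. Qed.

Lemma derivable_pt_lim_sqrt_comp f x l :
  derivable_pt_lim f x l -> 0 < f x -> derivable_pt_lim (fun t => sqrt (f t)) x (l / (2 * sqrt (f x))).
Proof.
  intros Hf Hpos; eapply derivable_pt_lim_val.
  - apply (derivable_pt_lim_comp f sqrt); [exact Hf | apply derivable_pt_lim_sqrt, Hpos].
  - unfold Rdiv; ring.
Qed.

Lemma derivable_pt_lim_reflect f x l :
  derivable_pt_lim f (- x) l -> derivable_pt_lim (fun t => f (- t)) x (- l).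
Proof.
  intros Hf; eapply derivable_pt_lim_val.
  - apply (derivable_pt_lim_comp (fun t => - t) f); [|exact Hf].
    apply derivable_pt_lim_opp, derivable_pt_lim_id.
  - ring.
Qed.

Lemma derivable_pt_lim_continuity_pt f x l : derivable_pt_lim f x l -> continuity_pt f x.
Proof. intros Hf; exact (derivable_continuous_pt f x (exist _ l Hf)). Qed.

Lemma nondecreasing_of_derivable f f' a b :
  a <= b -> (forall c, a <= c <= b -> derivable_pt_lim f c (f' c)) ->
  (forall c, a <= c <= b -> 0 <= f' c) -> f a <= f b.
Proof.
  intros [Hab | ->] Hd Hpos; [|lra].
  destruct (MVT_cor2 f f' a b Hab Hd) as [c [Hc Hcab]].
  assert (0 <= f' c) by (apply Hpos; lra); nra.
Qed.

Lemma le0_of_left_continuity h t : continuity_pt h t -> 0 < t ->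
  (forall s, 0 < s < t -> h s <= 0) -> h t <= 0.
Proof.
  intros Hh Ht Hleft; apply Rnot_lt_le; intros Hpos.
  destruct (Hh (h t) Hpos) as [d [Hd Hclose]].
  set (s := t - Rmin d t / 2).
  pose proof (Rmin_l d t); pose proof (Rmin_r d t); pose proof (Rmin_pos d t Hd Ht).
  assert (Hs : Rabs (h s - h t) < h t).
  { apply Hclose; split; [split; [exact I | unfold s; lra]|].
    simpl; unfold R_dist, s; rewrite Rabs_left; lra. }
  apply Rabs_def2 in Hs; assert (h s <= 0) by (apply Hleft; unfold s; lra); lra.
Qed.

Lemma pos_of_nonvanishing f : (forall x, I1 x -> continuity_pt f x) -> (forall x, I1 x -> f x <> 0) ->
  0 < f 0 -> forall x, I1 x -> 0 < f x.
Proof.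
  intros Hcont Hnz Hf0 x Hx; apply Rnot_le_lt; intros Hle.
  assert (Hneg : f x < 0) by (destruct Hle; [assumption | exfalso; apply (Hnz x Hx); assumption]).
  unfold I1 in Hx; destruct (Rtotal_order x 0) as [Hlt | [-> | Hgt]]; [| lra |].
  - destruct (IVT_interv f x 0) as [z [Hz Hfz]]; [intros; apply Hcont; unfold I1; lra | lra.. |].
    apply (Hnz z); [unfold I1; lra | exact Hfz].
  - destruct (IVT_interv (fun t => - f t) 0 x) as [z [Hz Hfz]];
      [intros; apply continuity_pt_opp, Hcont; unfold I1; lra | lra.. |].
    apply (Hnz z); [unfold I1; lra | lra].
Qed.

Definition vat (u : nat -> R -> R) (t : R) : nat -> R := fun i => u i t.

Lemma derivable_pt_lim_inner n u u' v v' x :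
  (forall i, (i < n)%nat -> derivable_pt_lim (u i) x (u' i x)) ->
  (forall i, (i < n)%nat -> derivable_pt_lim (v i) x (v' i x)) ->
  derivable_pt_lim (fun t => inner n (vat u t) (vat v t)) x
    (inner n (vat u' x) (vat v x) + inner n (vat u x) (vat v' x)).
Proof.
  intros Hu Hv; rewrite !inner_rsum, <- rsum_add.
  apply (derivable_pt_lim_rsum _ (fun i t => u i t * v i t) (fun i t => u' i t * v i t + u i t * v' i t)).
  intros i Hi; apply in_seq in Hi.
  apply derivable_pt_lim_mult; [apply Hu | apply Hv]; lia.
Qed.

Lemma derivable_pt_lim_vnorm n u u' x :
  (forall i, (i < n)%nat -> derivable_pt_lim (u i) x (u' i x)) -> 0 < inner n (vat u x) (vat u x) ->
  derivable_pt_lim (fun t => vnorm n (vat u t)) x (inner n (vat u x) (vat u' x) / vnorm n (vat u x)).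
Proof.
  intros Hu Hpos; eapply derivable_pt_lim_val.
  - apply (derivable_pt_lim_sqrt_comp (fun t => inner n (vat u t) (vat u t))); [|exact Hpos].
    apply derivable_pt_lim_inner; exact Hu.
  - unfold vnorm; rewrite (inner_sym n (vat u' x)); field; apply Rgt_not_eq, vnorm_gt0, Hpos.
Qed.

Lemma continuity_pt_vnorm n u u' x :
  (forall i, (i < n)%nat -> derivable_pt_lim (u i) x (u' i x)) ->
  continuity_pt (fun t => vnorm n (vat u t)) x.
Proof.
  intros Hu; apply (continuity_pt_comp (fun t => inner n (vat u t) (vat u t)) sqrt).
  - eapply derivable_pt_lim_continuity_pt, derivable_pt_lim_inner; exact Hu.
  - apply continuity_pt_sqrt, inner_ge0.
Qed.

(** * Behaviour as s -> 0+ and a Sturm comparison theorem *)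

Definition near0 (P : R -> Prop) : Prop := exists del, 0 < del /\ forall s, 0 < s < del -> P s.

Lemma near0_and P Q : near0 P -> near0 Q -> near0 (fun s => P s /\ Q s).
Proof.
  intros [d1 [Hd1 HP]] [d2 [Hd2 HQ]]; exists (Rmin d1 d2); split; [now apply Rmin_pos|].
  intros s Hs; pose proof (Rmin_l d1 d2); pose proof (Rmin_r d1 d2).
  split; [apply HP | apply HQ]; lra.
Qed.

Lemma near0_mono (P Q : R -> Prop) : (forall s, 0 < s -> P s -> Q s) -> near0 P -> near0 Q.
Proof. intros HPQ [d [Hd HP]]; exists d; split; [exact Hd|]; intros s Hs; apply HPQ, HP; lra. Qed.

Lemma near0_witness P x : near0 P -> 0 < x -> exists s, 0 < s < x /\ P s.
Proof.
  intros [d [Hd HP]] Hx; exists (Rmin d x / 2).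
  pose proof (Rmin_l d x); pose proof (Rmin_r d x); pose proof (Rmin_pos d x Hd Hx).
  split; [lra | apply HP; lra].
Qed.

Lemma near0_lt c : 0 < c -> near0 (fun s => s < c).
Proof. intros Hc; exists c; split; [exact Hc | intros s Hs; lra]. Qed.

Lemma near0_continuity_pt f eps :
  continuity_pt f 0 -> 0 < eps -> near0 (fun s => Rabs (f s - f 0) < eps).
Proof.
  intros Hf Heps; destruct (Hf eps Heps) as [d [Hd Hclose]]; exists d; split; [exact Hd|].
  intros s Hs; apply Hclose; split; [split; [exact I | lra]|].
  simpl; unfold R_dist; rewrite Rminus_0_r, Rabs_right; lra.
Qed.

Lemma near0_derivable_pt_lim f l eps :
  derivable_pt_lim f 0 l -> f 0 = 0 -> 0 < eps -> near0 (fun s => Rabs (f s - l * s) < eps * s).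
Proof.
  intros Hf Hf0 Heps; destruct (Hf eps Heps) as [[d Hd] Hclose]; exists d; split; [exact Hd|].
  intros s Hs; assert (Hq := Hclose s ltac:(lra) ltac:(simpl; rewrite Rabs_right; lra)).
  rewrite Rplus_0_l, Hf0, Rminus_0_r in Hq.
  replace (f s - l * s) with ((f s / s - l) * s) by (field; lra).
  rewrite Rabs_mult, (Rabs_right s) by lra; apply Rmult_lt_compat_r; lra.
Qed.

Lemma pos_by_continuous_induction (A : R -> R) b :
  (forall t, 0 < t < b -> continuity_pt A t) -> near0 (fun s => 0 < A s) ->
  (forall t, 0 < t < b -> (forall s, 0 < s < t -> 0 < A s) -> 0 < A t) ->
  forall t, 0 < t < b -> 0 < A t.
Proof.
  intros Hcont Hstart Hstep t1 Ht1; apply Rnot_le_lt; intros Hle.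
  set (E t := 0 <= t <= t1 /\ forall s, 0 < s <= t -> 0 < A s).
  destruct (completeness E) as [t0 [Hub Hlub]].
  { exists t1; intros t [Ht _]; lra. }
  { exists 0; split; [lra | intros; lra]. }
  assert (Hpos_below : forall s, 0 < s < t0 -> 0 < A s).
  { intros s Hs; apply Rnot_le_lt; intros HAs.
    enough (t0 <= s) by lra.
    apply Hlub; intros t [Ht HE]; apply Rnot_lt_le; intros Hst; specialize (HE s ltac:(lra)); lra. }
  assert (Ht0 : 0 < t0).
  { destruct Hstart as [d0 [Hd0 HA]].
    pose proof (Rmin_l d0 t1); pose proof (Rmin_r d0 t1); pose proof (Rmin_pos d0 t1 Hd0 ltac:(lra)).
    enough (Rmin d0 t1 / 2 <= t0) by lra.
    apply Hub; split; [lra | intros s Hs; apply HA; lra]. }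
  assert (Ht0t1 : t0 <= t1) by (apply Hlub; intros t [Ht _]; lra).
  assert (HAt0 : 0 < A t0) by (apply Hstep; [lra | exact Hpos_below]).
  assert (Ht0lt : t0 < t1) by (destruct (Req_dec t0 t1) as [Heq | ]; [rewrite Heq in HAt0 |]; lra).
  destruct (Hcont t0 ltac:(lra) (A t0) HAt0) as [d [Hd Hclose]].
  assert (t0 < Rmin (t0 + d / 2) t1) by (apply Rmin_glb_lt; lra).
  pose proof (Rmin_l (t0 + d / 2) t1); pose proof (Rmin_r (t0 + d / 2) t1).
  set (t' := Rmin (t0 + d / 2) t1) in *.
  enough (t' <= t0) by lra.
  apply Hub; split; [lra|]; intros s Hs.
  destruct (Rlt_le_dec s t0) as [Hlt | Hge]; [apply Hpos_below; lra|].
  destruct (Req_dec s t0) as [-> | Hne]; [exact HAt0|].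
  assert (Hs' : Rabs (A s - A t0) < A t0).
  { apply Hclose; split; [split; [exact I | lra]|]; simpl; unfold R_dist; rewrite Rabs_right; lra. }
  apply Rabs_def2 in Hs'; lra.
Qed.

Lemma nonneg_of_derivable_vanishing W W' x :
  (forall s, 0 < s <= x -> derivable_pt_lim W s (W' s)) -> (forall s, 0 < s <= x -> 0 <= W' s) ->
  (forall eps, 0 < eps -> near0 (fun s => Rabs (W s) < eps)) ->
  forall t, 0 < t <= x -> 0 <= W t.
Proof.
  intros HW HW' Hvan t Ht; apply Rnot_lt_le; intros Hneg.
  destruct (near0_witness _ t (Hvan (- W t) ltac:(lra)) ltac:(lra)) as [s [Hs Hsmall]].
  assert (W s <= W t)
    by (apply (nondecreasing_of_derivable W W'); intros; try apply HW; try apply HW'; lra).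
  apply Rabs_def2 in Hsmall; lra.
Qed.

Lemma le_of_ratio_nondecreasing (G U : R -> R) x :
  0 < x -> 0 <= G x -> (forall s, 0 < s <= x -> 0 < U s) ->
  (forall s, 0 < s <= x -> G s / U s <= G x / U x) ->
  (forall eps, 0 < eps < 1 -> near0 (fun s => (1 - eps) * U s <= G s)) ->
  U x <= G x.
Proof.
  intros Hx HGx HU Hmono Hstart.
  assert (HUx : 0 < U x) by (apply HU; lra).
  set (r := G x / U x).
  assert (Hr : 0 <= r) by (apply Rmult_le_pos; [exact HGx | apply Rlt_le, Rinv_0_lt_compat, HUx]).
  apply Rnot_lt_le; intros Hlt.
  assert (Hr1 : r < 1).
  { apply (Rmult_lt_reg_r (U x)); [exact HUx|].
    unfold r; field_simplify; lra. }
  destruct (near0_witness _ x (Hstart ((1 - r) / 2) ltac:(lra)) Hx) as [s [Hs Hclose]].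
  assert (HUs : 0 < U s) by (apply HU; lra).
  assert (1 - (1 - r) / 2 <= G s / U s) by (apply (Rmult_le_reg_r (U s)); [lra | field_simplify; lra]).
  assert (G s / U s <= r) by (apply Hmono; lra).
  lra.
Qed.

Lemma sturm_comparison (G g g' U U' p : R -> R) x :
  0 < x ->
  (forall s, 0 < s <= x -> 0 <= G s) -> (forall s, 0 < s <= x -> 0 < U s) ->
  (forall s, 0 < s <= x -> derivable_pt_lim G s (G s * g s)) ->
  (forall s, 0 < s <= x -> derivable_pt_lim g s (g' s)) ->
  (forall s, 0 < s <= x -> derivable_pt_lim U s (U' s)) ->
  (forall s, 0 < s <= x -> derivable_pt_lim U' s (- p s * U s)) ->
  (forall s, 0 < s <= x -> 0 <= g s ^ 2 + g' s + p s) ->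
  (forall eps, 0 < eps -> near0 (fun s => Rabs (G s * (g s * U s - U' s)) < eps)) ->
  (forall eps, 0 < eps < 1 -> near0 (fun s => (1 - eps) * U s <= G s)) ->
  U x <= G x.
Proof.
  intros Hx HG HU DG Dg DU DU' Hriccati Hwronski Hstart.
  (* the Wronskian-type quantity W = G' U - G U' satisfies W' = (G'' + p G) U = G U (g^2 + g' + p) *)
  set (W s := G s * (g s * U s - U' s)).
  assert (HW : forall s, 0 < s <= x -> 0 <= W s).
  { apply (nonneg_of_derivable_vanishing W (fun s => G s * U s * (g s ^ 2 + g' s + p s)));
      [| | exact Hwronski].
    - intros s Hs; unfold W; eapply derivable_pt_lim_val.
      + apply derivable_pt_lim_mult; [apply DG, Hs|].
        apply derivable_pt_lim_minus; [apply derivable_pt_lim_mult; [apply Dg | apply DU] | apply DU'];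
          exact Hs.
      + cbv beta; ring.
    - intros s Hs; apply Rmult_le_pos; [apply Rmult_le_pos; [apply HG | apply Rlt_le, HU] | apply Hriccati];
        exact Hs. }
  assert (Hmono : forall s, 0 < s <= x -> G s / U s <= G x / U x).
  { intros s Hs.
    apply (nondecreasing_of_derivable (fun c => G c / U c) (fun c => W c / U c ^ 2)); [lra| |].
    - intros c Hc; assert (0 < U c) by (apply HU; lra); eapply derivable_pt_lim_val.
      + apply derivable_pt_lim_div; [apply DG | apply DU | ]; lra.
      + unfold W, Rsqr; field; lra.
    - intros c Hc; assert (0 < U c) by (apply HU; lra).
      apply Rmult_le_pos; [apply HW; lra | apply Rlt_le, Rinv_0_lt_compat, pow_lt; lra]. }
  apply (le_of_ratio_nondecreasing G U x); [exact Hx | apply HG; lra | exact HU | exact Hmono | exact Hstart].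
Qed.

(** * The curve ratio |phi| / |phi'|^(1/2) and the model ratio F / sqrt F' *)

Definition curve_ratio n (phi phi1 : nat -> R -> R) (t : R) : R :=
  vnorm n (vat phi t) / sqrt (vnorm n (vat phi1 t)).

Definition ratio_logderiv n (a b c : nat -> R) : R :=
  inner n a b / inner n a a - inner n b c / (2 * inner n b b).

Definition ratio_logderiv_deriv n (a b c d : nat -> R) : R :=
  ((inner n b b + inner n a c) * inner n a a - 2 * inner n a b ^ 2) / inner n a a ^ 2
  - ((inner n c c + inner n b d) * (2 * inner n b b) - 4 * inner n b c ^ 2) / (2 * inner n b b) ^ 2.

Lemma S1_inner n b c d : 0 < inner n b b ->
  S1 n b c d = inner n b d / inner n b b - 3 * inner n b c ^ 2 / inner n b b ^ 2
               + 3 / 2 * inner n c c / inner n b b.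
Proof.
  intros Hb; unfold S1.
  replace (vnorm n b ^ 4) with ((vnorm n b ^ 2) ^ 2) by ring.
  rewrite !vnorm_sqr; reflexivity.
Qed.

Lemma S1_reflect n b c d : S1 n (fun i => - b i) c (fun i => - d i) = S1 n b c d.
Proof.
  unfold S1; rewrite !vnorm_opp, inner_opp, inner_oppl.
  replace ((- inner n b c) ^ 2) with (inner n b c ^ 2) by ring; reflexivity.
Qed.

Lemma ratio_riccati_ge0 n a b c d : 0 < inner n a a -> 0 < inner n b b ->
  0 <= ratio_logderiv n a b c ^ 2 + ratio_logderiv_deriv n a b c d + S1 n b c d / 2.
Proof.
  intros Ha Hb; rewrite S1_inner by exact Hb; unfold ratio_logderiv, ratio_logderiv_deriv.
  set (A := inner n a a); set (B := inner n a b); set (C := inner n b b).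
  set (D := inner n b c); set (E := inner n a c); set (Fc := inner n c c); set (H := inner n b d).
  (* the left side is |2 C^2 a - (2 C B + A D) b + A C c|^2 / (4 A^2 C^3) *)
  pose proof (inner_ge0 n (fun i => 2 * C ^ 2 * a i + (- (2 * C * B + A * D)) * b i + A * C * c i)) as Hsq.
  rewrite inner_comb3 in Hsq; fold A B C D E Fc in Hsq.
  fold A in Ha; fold C in Hb.
  assert (Hden : 0 < 4 * A ^ 2 * C ^ 3) by (apply Rmult_lt_0_compat; [nra | apply pow_lt; lra]).
  apply Rle_trans with ((2 * C ^ 2 * (2 * C ^ 2) * A + - (2 * C * B + A * D) * - (2 * C * B + A * D) * C
    + A * C * (A * C) * Fc + 2 * (2 * C ^ 2) * - (2 * C * B + A * D) * B + 2 * (2 * C ^ 2) * (A * C) * E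
    + 2 * - (2 * C * B + A * D) * (A * C) * D) / (4 * A ^ 2 * C ^ 3)).
  - apply Rmult_le_pos; [exact Hsq | apply Rlt_le, Rinv_0_lt_compat, Hden].
  - right; field; split; lra.
Qed.

Lemma derivable_curve_ratio n phi phi1 phi2 x :
  (forall i, (i < n)%nat -> derivable_pt_lim (phi i) x (phi1 i x)) ->
  (forall i, (i < n)%nat -> derivable_pt_lim (phi1 i) x (phi2 i x)) ->
  0 < inner n (vat phi x) (vat phi x) -> 0 < inner n (vat phi1 x) (vat phi1 x) ->
  derivable_pt_lim (curve_ratio n phi phi1) x
    (curve_ratio n phi phi1 x * ratio_logderiv n (vat phi x) (vat phi1 x) (vat phi2 x)).
Proof.
  intros H1 H2 HA HC; unfold curve_ratio, ratio_logderiv.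
  pose proof (vnorm_gt0 _ _ HA) as Ha; pose proof (vnorm_gt0 _ _ HC) as Hc.
  pose proof (sqrt_lt_R0 _ Hc) as Hq.
  eapply derivable_pt_lim_val.
  - apply derivable_pt_lim_div; [apply derivable_pt_lim_vnorm; [exact H1 | exact HA] | | lra].
    apply (derivable_pt_lim_sqrt_comp (fun t => vnorm n (vat phi1 t))); [|exact Hc].
    apply derivable_pt_lim_vnorm; [exact H2 | exact HC].
  - rewrite <- (vnorm_sqr n (vat phi x)), <- (vnorm_sqr n (vat phi1 x)).
    set (q := sqrt (vnorm n (vat phi1 x))) in *.
    assert (Hqq : vnorm n (vat phi1 x) = q * q) by (symmetry; apply sqrt_sqrt; lra).
    rewrite Hqq; unfold Rsqr; field; lra.
Qed.

Lemma derivable_ratio_logderiv n phi phi1 phi2 phi3 x :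
  (forall i, (i < n)%nat -> derivable_pt_lim (phi i) x (phi1 i x)) ->
  (forall i, (i < n)%nat -> derivable_pt_lim (phi1 i) x (phi2 i x)) ->
  (forall i, (i < n)%nat -> derivable_pt_lim (phi2 i) x (phi3 i x)) ->
  0 < inner n (vat phi x) (vat phi x) -> 0 < inner n (vat phi1 x) (vat phi1 x) ->
  derivable_pt_lim (fun t => ratio_logderiv n (vat phi t) (vat phi1 t) (vat phi2 t)) x
    (ratio_logderiv_deriv n (vat phi x) (vat phi1 x) (vat phi2 x) (vat phi3 x)).
Proof.
  intros H1 H2 H3 HA HC; unfold ratio_logderiv, ratio_logderiv_deriv.
  eapply derivable_pt_lim_val.
  - apply derivable_pt_lim_minus; apply derivable_pt_lim_div.
    + apply derivable_pt_lim_inner; [exact H1 | exact H2].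
    + apply derivable_pt_lim_inner; exact H1.
    + lra.
    + apply derivable_pt_lim_inner; [exact H2 | exact H3].
    + apply derivable_pt_lim_scal, derivable_pt_lim_inner; exact H2.
    + lra.
  - rewrite (inner_sym n (vat phi1 x) (vat phi x)), (inner_sym n (vat phi2 x) (vat phi1 x)).
    unfold Rsqr; field; lra.
Qed.

Lemma curve_ratio_ge0 n phi phi1 t :
  0 < inner n (vat phi1 t) (vat phi1 t) -> 0 <= curve_ratio n phi phi1 t.
Proof.
  intros HC; apply Rmult_le_pos; [apply vnorm_ge0|].
  apply Rlt_le, Rinv_0_lt_compat, sqrt_lt_R0, vnorm_gt0, HC.
Qed.

Lemma continuity_curve_ratio n phi phi1 phi2 x :
  (forall i, (i < n)%nat -> derivable_pt_lim (phi i) x (phi1 i x)) ->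
  (forall i, (i < n)%nat -> derivable_pt_lim (phi1 i) x (phi2 i x)) ->
  0 < inner n (vat phi1 x) (vat phi1 x) -> continuity_pt (curve_ratio n phi phi1) x.
Proof.
  intros H1 H2 HC; pose proof (vnorm_gt0 _ _ HC) as Hc.
  apply continuity_pt_div.
  - exact (continuity_pt_vnorm n phi phi1 x H1).
  - apply (continuity_pt_comp (fun t => vnorm n (vat phi1 t)) sqrt).
    + exact (continuity_pt_vnorm n phi1 phi2 x H2).
    + apply continuity_pt_sqrt; lra.
  - apply Rgt_not_eq, sqrt_lt_R0, Hc.
Qed.

Lemma abs_ratio_mul_logderiv_le n a b c : 0 < inner n a a -> 0 < inner n b b ->
  Rabs (vnorm n a / sqrt (vnorm n b) * ratio_logderiv n a b c)
  <= sqrt (vnorm n b) + vnorm n a * Rabs (inner n b c) / (2 * inner n b b * sqrt (vnorm n b)).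
Proof.
  intros HA HC; unfold ratio_logderiv.
  pose proof (Cauchy_Schwarz n a b HC) as HCS.
  pose proof (vnorm_gt0 _ _ HA) as Ha; pose proof (vnorm_gt0 _ _ HC) as Hc.
  rewrite <- (vnorm_sqr n a), <- (vnorm_sqr n b) in *.
  set (na := vnorm n a) in *; set (nb := vnorm n b) in *.
  set (q := sqrt nb); assert (Hq : 0 < q) by (apply sqrt_lt_R0, Hc).
  assert (Hqq : nb = q * q) by (symmetry; apply sqrt_sqrt; lra).
  set (B := inner n a b) in *; set (D := inner n b c).
  assert (HB : Rabs B <= na * nb).
  { rewrite <- (Rabs_right (na * nb)) by nra; apply Rsqr_le_abs_0; unfold Rsqr; nra. }
  replace (na / q * (B / na ^ 2 - D / (2 * nb ^ 2)))
    with (B / (na * q) - na * D / (2 * nb ^ 2 * q)) by (field; lra).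
  eapply Rle_trans; [apply Rabs_triang|]; rewrite Rabs_Ropp; apply Rplus_le_compat.
  - unfold Rdiv; rewrite Rabs_mult, Rabs_inv, (Rabs_right (na * q)) by nra.
    apply (Rmult_le_reg_r (na * q)); [nra|].
    rewrite Rmult_assoc, Rinv_l by nra.
    replace (q * (na * q)) with (na * nb) by (rewrite Hqq; ring); lra.
  - unfold Rdiv; rewrite Rabs_mult, Rabs_mult, Rabs_inv, (Rabs_right na), (Rabs_right (2 * nb ^ 2 * q))
      by nra.
    right; ring.
Qed.

Definition wronskian_bound n (a b c : nat -> R) (u u' : R) : R :=
  (sqrt (vnorm n b) + vnorm n a * Rabs (inner n b c) / (2 * inner n b b * sqrt (vnorm n b))) * Rabs u
  + vnorm n a / sqrt (vnorm n b) * Rabs u'.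

Lemma abs_wronskian_le n a b c u u' : 0 < inner n a a -> 0 < inner n b b ->
  Rabs (vnorm n a / sqrt (vnorm n b) * (ratio_logderiv n a b c * u - u')) <= wronskian_bound n a b c u u'.
Proof.
  intros HA HC; pose proof (abs_ratio_mul_logderiv_le n a b c HA HC) as Hg.
  assert (HG : 0 <= vnorm n a / sqrt (vnorm n b)).
  { apply Rmult_le_pos; [apply vnorm_ge0 | apply Rlt_le, Rinv_0_lt_compat, sqrt_lt_R0, vnorm_gt0, HC]. }
  unfold wronskian_bound; rewrite Rmult_minus_distr_l, <- Rmult_assoc.
  eapply Rle_trans; [apply Rabs_triang|].
  rewrite Rabs_Ropp, Rabs_mult, (Rabs_mult (vnorm n a / sqrt (vnorm n b)) u').
  rewrite (Rabs_right (vnorm n a / sqrt (vnorm n b))) by lra.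
  apply Rplus_le_compat_r, Rmult_le_compat_r; [apply Rabs_pos | exact Hg].
Qed.

Definition model_ratio (F F1 : R -> R) (t : R) : R := F t / sqrt (F1 t).

Definition model_ratio_deriv (F F1 F2 : R -> R) (t : R) : R :=
  (F1 t - F t * (F2 t / F1 t) / 2) / sqrt (F1 t).

Lemma derivable_model_ratio F F1 F2 x :
  derivable_pt_lim F x (F1 x) -> derivable_pt_lim F1 x (F2 x) -> 0 < F1 x ->
  derivable_pt_lim (model_ratio F F1) x (model_ratio_deriv F F1 F2 x).
Proof.
  intros HF HF1 Hpos; unfold model_ratio, model_ratio_deriv.
  pose proof (sqrt_lt_R0 _ Hpos) as Hs.
  eapply derivable_pt_lim_val.
  - apply derivable_pt_lim_div; [exact HF | | lra].
    apply derivable_pt_lim_sqrt_comp; [exact HF1 | exact Hpos].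
  - set (q := sqrt (F1 x)) in *.
    assert (Hqq : F1 x = q * q) by (symmetry; apply sqrt_sqrt; lra).
    rewrite Hqq; unfold Rsqr; field; lra.
Qed.

(* [U = F / sqrt F'] solves [U'' + (S F / 2) U = 0]; the hypothesis on [F''/F'] says [S F = 2 p]. *)
Lemma derivable_model_ratio_deriv p F F1 F2 x :
  derivable_pt_lim F x (F1 x) -> derivable_pt_lim F1 x (F2 x) -> 0 < F1 x ->
  derivable_pt_lim (fun t => F2 t / F1 t) x (2 * p x + 1 / 2 * (F2 x / F1 x) ^ 2) ->
  derivable_pt_lim (model_ratio_deriv F F1 F2) x (- p x * model_ratio F F1 x).
Proof.
  intros HF HF1 Hpos Hschw; unfold model_ratio, model_ratio_deriv.
  pose proof (sqrt_lt_R0 _ Hpos) as Hs.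
  eapply derivable_pt_lim_val.
  - apply derivable_pt_lim_div; [| apply derivable_pt_lim_sqrt_comp; [exact HF1 | exact Hpos] | lra].
    apply derivable_pt_lim_minus; [exact HF1|].
    apply derivable_pt_lim_div; [apply derivable_pt_lim_mult; [exact HF | exact Hschw] | | lra].
    apply derivable_pt_lim_const.
  - set (q := sqrt (F1 x)) in *.
    assert (Hqq : F1 x = q * q) by (symmetry; apply sqrt_sqrt; lra).
    cbv beta; rewrite Hqq; unfold Rsqr; field; lra.
Qed.

(** * The comparison on (0, 1) and its reflection *)

Section RightHalf.

Variables (n : nat) (phi phi1 phi2 phi3 : nat -> R -> R) (p F F1 F2 : R -> R).

Hypothesis Hphi1 : forall i x, (i < n)%nat -> I1 x -> derivable_pt_lim (phi i) x (phi1 i x).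
Hypothesis Hphi2 : forall i x, (i < n)%nat -> I1 x -> derivable_pt_lim (phi1 i) x (phi2 i x).
Hypothesis Hphi3 : forall i x, (i < n)%nat -> I1 x -> derivable_pt_lim (phi2 i) x (phi3 i x).
Hypothesis Hphi1_pos : forall x, I1 x -> 0 < inner n (vat phi1 x) (vat phi1 x).
Hypothesis Hphi0 : forall i, (i < n)%nat -> phi i 0 = 0.
Hypothesis Hphi10 : inner n (vat phi1 0) (vat phi1 0) = 1.
Hypothesis HF1 : forall x, I1 x -> derivable_pt_lim F x (F1 x).
Hypothesis HF2 : forall x, I1 x -> derivable_pt_lim F1 x (F2 x).
Hypothesis HF1_pos : forall x, I1 x -> 0 < F1 x.
Hypothesis HFschw : forall x, I1 x ->
  derivable_pt_lim (fun t => F2 t / F1 t) x (2 * p x + 1 / 2 * (F2 x / F1 x) ^ 2).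
Hypothesis HF0 : F 0 = 0.
Hypothesis HF10 : F1 0 = 1.
Hypothesis HS1 : forall x, I1 x -> S1 n (vat phi1 x) (vat phi2 x) (vat phi3 x) <= 2 * p x.

Let I1_0 : I1 0.
Proof. unfold I1; lra. Qed.

Lemma model_ratio_pos s : 0 < s < 1 -> 0 < model_ratio F F1 s.
Proof.
  intros Hs; apply Rdiv_lt_0_compat; [| apply sqrt_lt_R0, HF1_pos; unfold I1; lra].
  destruct (MVT_cor2 F F1 0 s ltac:(lra)) as [c [Hc Hcs]].
  { intros c Hc; apply HF1; unfold I1; lra. }
  assert (0 < F1 c) by (apply HF1_pos; unfold I1; lra).
  rewrite HF0 in Hc; nra.
Qed.

Lemma vnorm_curve_ge_near0 e : 0 < e -> near0 (fun s => (1 - e) * s < vnorm n (vat phi s)).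
Proof.
  intros He.
  (* h(s) = <phi(s), phi'(0)> has h(0) = 0, h'(0) = 1 and |h| <= |phi| by Cauchy-Schwarz *)
  set (h s := inner n (vat phi s) (vat phi1 0)).
  assert (Dh : derivable_pt_lim h 0 1).
  { eapply derivable_pt_lim_val.
    - apply (derivable_pt_lim_inner n phi phi1 (fun i _ => phi1 i 0) (fun _ _ => 0));
        intros i Hi; [apply Hphi1; [exact Hi | exact I1_0] | apply derivable_pt_lim_const].
    - change (inner n (vat phi1 0) (vat phi1 0) + inner n (vat phi 0) (fun _ => 0) = 1).
      rewrite Hphi10, inner_eq0l by exact Hphi0; ring. }
  assert (h0 : h 0 = 0) by (apply inner_eq0l; intros i Hi; apply Hphi0, Hi).
  apply (near0_mono (fun s => Rabs (h s - 1 * s) < e * s));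
    [| exact (near0_derivable_pt_lim h 1 e Dh h0 He)].
  intros s Hs Hclose; apply Rabs_def2 in Hclose.
  assert (HCS : h s ^ 2 <= vnorm n (vat phi s) ^ 2).
  { rewrite vnorm_sqr; pose proof (Cauchy_Schwarz n (vat phi s) (vat phi1 0)) as H.
    rewrite Hphi10 in H; unfold h; lra. }
  pose proof (vnorm_ge0 n (vat phi s)).
  destruct (Rlt_le_dec (vnorm n (vat phi s)) (h s)); nra.
Qed.

Lemma continuity_sqrt_speed : continuity_pt (fun s => sqrt (vnorm n (vat phi1 s))) 0.
Proof.
  apply (continuity_pt_comp (fun s => vnorm n (vat phi1 s)) sqrt).
  - apply (continuity_pt_vnorm n phi1 phi2); intros; apply Hphi2; auto.
  - apply continuity_pt_sqrt, vnorm_ge0.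
Qed.

Lemma sqrt_speed_at0 : sqrt (vnorm n (vat phi1 0)) = 1.
Proof. unfold vnorm; rewrite Hphi10, !sqrt_1; reflexivity. Qed.

Lemma curve_ratio_ge_model_near0 eps : 0 < eps < 1 ->
  near0 (fun s => (1 - eps) * model_ratio F F1 s <= curve_ratio n phi phi1 s).
Proof.
  intros Heps; set (e := eps / 4); assert (He : 0 < e < 1) by (unfold e; lra).
  assert (DU : derivable_pt_lim (model_ratio F F1) 0 1).
  { eapply derivable_pt_lim_val; [apply (derivable_model_ratio F F1 F2); auto|].
    unfold model_ratio_deriv; rewrite HF0, HF10, sqrt_1; field. }
  assert (HU0 : model_ratio F F1 0 = 0) by (unfold model_ratio; rewrite HF0; unfold Rdiv; ring).
  generalize (near0_and _ _ (vnorm_curve_ge_near0 e ltac:(lra))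
               (near0_and _ _ (near0_continuity_pt _ e continuity_sqrt_speed ltac:(lra))
                              (near0_derivable_pt_lim _ _ e DU HU0 ltac:(lra)))).
  apply near0_mono; intros s Hs [Hlow [Hq HU]]; rewrite sqrt_speed_at0 in Hq.
  apply Rabs_def2 in Hq; apply Rabs_def2 in HU.
  unfold curve_ratio; set (q := sqrt (vnorm n (vat phi1 s))) in *.
  assert (0 < q) by lra.
  (* [G s > (1 - e) s / (1 + e)] and [U s < (1 + e) s], and [(1 - 4 e) (1 + e)^2 <= 1 - e] *)
  assert (Hgap : (1 - eps) * (1 + e) ^ 2 <= 1 - e) by (unfold e; nra).
  apply Rle_trans with ((1 - e) * s / (1 + e)).
  - apply Rle_trans with ((1 - eps) * ((1 + e) * s)); [apply Rmult_le_compat_l; lra|].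
    apply (Rmult_le_reg_r (1 + e)); [lra|].
    replace ((1 - e) * s / (1 + e) * (1 + e)) with ((1 - e) * s) by (field; lra).
    nra.
  - apply (Rmult_le_reg_r q); [lra|].
    replace (vnorm n (vat phi s) / q * q) with (vnorm n (vat phi s)) by (field; lra).
    apply Rle_trans with ((1 - e) * s); [| lra].
    apply (Rmult_le_reg_r (1 + e)); [lra|].
    replace ((1 - e) * s / (1 + e) * q * (1 + e)) with ((1 - e) * s * q) by (field; lra).
    apply Rmult_le_compat_l; [nra | lra].
Qed.

Lemma continuity_wronskian_bound :
  continuity_pt (fun s => wronskian_bound n (vat phi s) (vat phi1 s) (vat phi2 s)
                            (model_ratio F F1 s) (model_ratio_deriv F F1 F2 s)) 0.
Proof.
  assert (Habs : forall f, continuity_pt f 0 -> continuity_pt (fun s => Rabs (f s)) 0).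
  { intros f Hf; apply (continuity_pt_comp f Rabs); [exact Hf | apply Rcontinuity_abs]. }
  unfold wronskian_bound; apply continuity_pt_plus; apply continuity_pt_mult.
  - apply continuity_pt_plus; [exact continuity_sqrt_speed|].
    apply continuity_pt_div; [apply continuity_pt_mult| |].
    + apply (continuity_pt_vnorm n phi phi1); intros; apply Hphi1; auto.
    + apply Habs; eapply derivable_pt_lim_continuity_pt, derivable_pt_lim_inner;
        intros; [apply Hphi2 | apply Hphi3]; auto.
    + apply continuity_pt_mult; [apply continuity_pt_mult | exact continuity_sqrt_speed].
      * apply continuity_pt_const; intros ? ?; reflexivity.
      * eapply derivable_pt_lim_continuity_pt, derivable_pt_lim_inner; intros; apply Hphi2; auto.
    + rewrite sqrt_speed_at0, Hphi10; lra.
  - apply Habs; eapply derivable_pt_lim_continuity_pt, derivable_model_ratio; auto.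
  - apply (continuity_curve_ratio n phi phi1 phi2);
      intros; [apply Hphi1 | apply Hphi2 | apply Hphi1_pos]; auto.
  - apply Habs; eapply derivable_pt_lim_continuity_pt, derivable_model_ratio_deriv; auto.
Qed.

Lemma wronskian_bound_at0 :
  wronskian_bound n (vat phi 0) (vat phi1 0) (vat phi2 0)
    (model_ratio F F1 0) (model_ratio_deriv F F1 F2 0) = 0.
Proof.
  assert (Ha0 : vnorm n (vat phi 0) = 0)
    by (unfold vnorm; rewrite inner_eq0l, sqrt_0 by exact Hphi0; reflexivity).
  unfold wronskian_bound, model_ratio; rewrite Ha0, HF0; unfold Rdiv; rewrite !Rmult_0_l, Rabs_R0; ring.
Qed.

Lemma wronskian_vanishes eps : 0 < eps ->
  near0 (fun s => Rabs (curve_ratio n phi phi1 s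
                        * (ratio_logderiv n (vat phi s) (vat phi1 s) (vat phi2 s) * model_ratio F F1 s
                           - model_ratio_deriv F F1 F2 s)) < eps).
Proof.
  intros Heps.
  generalize (near0_and _ _ (near0_continuity_pt _ eps continuity_wronskian_bound Heps)
               (near0_and _ _ (vnorm_curve_ge_near0 (1 / 2) ltac:(lra)) (near0_lt 1 ltac:(lra)))).
  apply near0_mono; intros s Hs [Hbound [Hlow Hs1]].
  rewrite wronskian_bound_at0, Rminus_0_r in Hbound; apply Rabs_def2 in Hbound.
  assert (HAs : 0 < inner n (vat phi s) (vat phi s)) by (rewrite <- vnorm_sqr; nra).
  assert (HCs : 0 < inner n (vat phi1 s) (vat phi1 s)) by (apply Hphi1_pos; unfold I1; lra).
  eapply Rle_lt_trans; [apply (abs_wronskian_le n _ _ _ _ _ HAs HCs) | lra].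
Qed.

Lemma model_le_curve_ratio_of_pos x : 0 < x < 1 ->
  (forall s, 0 < s <= x -> 0 < inner n (vat phi s) (vat phi s)) ->
  model_ratio F F1 x <= curve_ratio n phi phi1 x.
Proof.
  intros Hx HA.
  assert (HI : forall s, 0 < s <= x -> I1 s) by (intros; unfold I1; lra).
  apply (sturm_comparison _ (fun s => ratio_logderiv n (vat phi s) (vat phi1 s) (vat phi2 s))
           (fun s => ratio_logderiv_deriv n (vat phi s) (vat phi1 s) (vat phi2 s) (vat phi3 s))
           _ (model_ratio_deriv F F1 F2) p); try intros s Hs.
  - lra.
  - apply curve_ratio_ge0, Hphi1_pos, HI, Hs.
  - apply model_ratio_pos; lra.
  - apply (derivable_curve_ratio n phi phi1 phi2);
      intros; [apply Hphi1 | apply Hphi2 | apply HA | apply Hphi1_pos]; auto.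
  - apply derivable_ratio_logderiv;
      intros; [apply Hphi1 | apply Hphi2 | apply Hphi3 | apply HA | apply Hphi1_pos]; auto.
  - apply (derivable_model_ratio F F1 F2); auto.
  - apply derivable_model_ratio_deriv; auto.
  - pose proof (ratio_riccati_ge0 n (vat phi s) (vat phi1 s) (vat phi2 s) (vat phi3 s)
                  (HA s Hs) (Hphi1_pos s (HI s Hs))).
    pose proof (HS1 s (HI s Hs)); lra.
  - apply wronskian_vanishes; exact Hs.
  - apply curve_ratio_ge_model_near0; exact Hs.
Qed.

Lemma curve_inner_pos x : 0 < x < 1 -> 0 < inner n (vat phi x) (vat phi x).
Proof.
  apply (pos_by_continuous_induction (fun s => inner n (vat phi s) (vat phi s))).
  - intros t Ht; eapply derivable_pt_lim_continuity_pt, derivable_pt_lim_inner;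
      intros; apply Hphi1; auto; unfold I1; lra.
  - apply (near0_mono (fun s => (1 - 1 / 2) * s < vnorm n (vat phi s)));
      [| apply vnorm_curve_ge_near0; lra].
    intros s Hs Hlow; rewrite <- vnorm_sqr; nra.
  - intros t Ht Hbelow.
    (* by the comparison below t and continuity at t, G t >= U t > 0, so phi t <> 0 *)
    assert (It : I1 t) by (unfold I1; lra).
    assert (Hle : model_ratio F F1 t - curve_ratio n phi phi1 t <= 0).
    { apply (le0_of_left_continuity (fun s => model_ratio F F1 s - curve_ratio n phi phi1 s)); [| lra |].
      - apply continuity_pt_minus.
        + eapply derivable_pt_lim_continuity_pt, derivable_model_ratio; auto.
        + apply (continuity_curve_ratio n phi phi1 phi2); intros; auto.
      - intros s Hs.
        pose proof (model_le_curve_ratio_of_pos s ltac:(lra) ltac:(intros; apply Hbelow; lra)); lra. }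
    pose proof (model_ratio_pos t Ht).
    assert (Hnorm : 0 < vnorm n (vat phi t)).
    { destruct (vnorm_ge0 n (vat phi t)) as [| Hz]; [assumption|].
      unfold curve_ratio in Hle; rewrite <- Hz in Hle; unfold Rdiv in Hle; lra. }
    rewrite <- vnorm_sqr; nra.
Qed.

Lemma abs_model_le_curve_ratio_right x :
  0 < x < 1 -> Rabs (F x) / sqrt (F1 x) <= curve_ratio n phi phi1 x.
Proof.
  intros Hx; pose proof (model_ratio_pos x Hx) as HU; unfold model_ratio in HU.
  assert (0 < sqrt (F1 x)) by (apply sqrt_lt_R0, HF1_pos; unfold I1; lra).
  rewrite Rabs_right by (left; apply (Rmult_lt_reg_r (/ sqrt (F1 x))); [apply Rinv_0_lt_compat; lra | lra]).
  apply model_le_curve_ratio_of_pos; [exact Hx | intros; apply curve_inner_pos; lra].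
Qed.

End RightHalf.

Section LeftHalf.

Variables (n : nat) (phi phi1 phi2 phi3 : nat -> R -> R) (p F F1 F2 : R -> R).

Hypothesis Hp_even : forall x, I1 x -> p (- x) = p x.
Hypothesis Hphi1 : forall i x, (i < n)%nat -> I1 x -> derivable_pt_lim (phi i) x (phi1 i x).
Hypothesis Hphi2 : forall i x, (i < n)%nat -> I1 x -> derivable_pt_lim (phi1 i) x (phi2 i x).
Hypothesis Hphi3 : forall i x, (i < n)%nat -> I1 x -> derivable_pt_lim (phi2 i) x (phi3 i x).
Hypothesis Hphi1_pos : forall x, I1 x -> 0 < inner n (vat phi1 x) (vat phi1 x).
Hypothesis Hphi0 : forall i, (i < n)%nat -> phi i 0 = 0.
Hypothesis Hphi10 : inner n (vat phi1 0) (vat phi1 0) = 1.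
Hypothesis HF1 : forall x, I1 x -> derivable_pt_lim F x (F1 x).
Hypothesis HF2 : forall x, I1 x -> derivable_pt_lim F1 x (F2 x).
Hypothesis HF1_pos : forall x, I1 x -> 0 < F1 x.
Hypothesis HFschw : forall x, I1 x ->
  derivable_pt_lim (fun t => F2 t / F1 t) x (2 * p x + 1 / 2 * (F2 x / F1 x) ^ 2).
Hypothesis HF0 : F 0 = 0.
Hypothesis HF10 : F1 0 = 1.
Hypothesis HS1 : forall x, I1 x -> S1 n (vat phi1 x) (vat phi2 x) (vat phi3 x) <= 2 * p x.

Let I1_opp t : I1 t -> I1 (- t).
Proof. unfold I1; lra. Qed.

(* [t |-> phi (- t)] and [t |-> - F (- t)] satisfy the same hypotheses, since [p] is even *)
Lemma abs_model_le_curve_ratio_left x :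
  -1 < x < 0 -> Rabs (F x) / sqrt (F1 x) <= curve_ratio n phi phi1 x.
Proof.
  intros Hx.
  enough (H : Rabs (- F (- - x)) / sqrt (F1 (- - x))
              <= curve_ratio n (fun i t => phi i (- t)) (fun i t => - phi1 i (- t)) (- x)).
  { unfold curve_ratio, vat in H; rewrite Ropp_involutive, Rabs_Ropp, vnorm_opp in H; exact H. }
  apply (abs_model_le_curve_ratio_right n _ _ (fun i t => phi2 i (- t)) (fun i t => - phi3 i (- t))
           p (fun t => - F (- t)) (fun t => F1 (- t)) (fun t => - F2 (- t))).
  - intros i t Hi Ht; apply derivable_pt_lim_reflect, Hphi1; auto.
  - intros i t Hi Ht; eapply derivable_pt_lim_val;
      [apply derivable_pt_lim_opp, derivable_pt_lim_reflect, Hphi2; auto | ring].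
  - intros i t Hi Ht; apply derivable_pt_lim_reflect, Hphi3; auto.
  - intros t Ht; unfold vat; rewrite inner_opp; apply Hphi1_pos; auto.
  - intros i Hi; rewrite Ropp_0; apply Hphi0; exact Hi.
  - unfold vat; rewrite inner_opp, Ropp_0; exact Hphi10.
  - intros t Ht; eapply derivable_pt_lim_val;
      [apply derivable_pt_lim_opp, derivable_pt_lim_reflect, HF1; auto | ring].
  - intros t Ht; apply derivable_pt_lim_reflect, HF2; auto.
  - intros t Ht; apply HF1_pos; auto.
  - intros t Ht; eapply derivable_pt_lim_val.
    + apply (derivable_pt_lim_ext (fun s => - (F2 (- s) / F1 (- s)))); [intros s; unfold Rdiv; ring|].
      apply derivable_pt_lim_opp, (derivable_pt_lim_reflect (fun s => F2 s / F1 s)), HFschw; auto.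
    + rewrite Hp_even by exact Ht; unfold Rdiv; ring.
  - rewrite Ropp_0, HF0; ring.
  - rewrite Ropp_0; exact HF10.
  - intros t Ht; unfold vat; rewrite S1_reflect, <- Hp_even by exact Ht; apply HS1; auto.
  - lra.
Qed.

Lemma abs_model_le_curve_ratio x : I1 x -> Rabs (F x) / sqrt (F1 x) <= curve_ratio n phi phi1 x.
Proof.
  intros Hx; destruct (Rtotal_order x 0) as [Hneg | [-> | Hpos]].
  - apply abs_model_le_curve_ratio_left; unfold I1 in Hx; lra.
  - rewrite HF0, Rabs_R0; unfold Rdiv; rewrite Rmult_0_l; apply curve_ratio_ge0, Hphi1_pos, Hx.
  - apply (abs_model_le_curve_ratio_right n phi phi1 phi2 phi3 p F F1 F2); auto; unfold I1 in Hx; lra.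
Qed.

End LeftHalf.

Theorem mainTheorem2
  (p : R -> R)
  (Hp_pos : forall x, I1 x -> 0 < p x)
  (Hp_cont : forall x, I1 x -> continuity_pt p x)
  (Hp_even : forall x, I1 x -> p (- x) = p x)
  (Hp_disc : disconjugate p)
  (F F1 F2 : R -> R)
  (HF1 : forall x, I1 x -> derivable_pt_lim F x (F1 x))
  (HF2 : forall x, I1 x -> derivable_pt_lim F1 x (F2 x))
  (HF1nz : forall x, I1 x -> F1 x <> 0)
  (HFschw : forall x, I1 x ->
     derivable_pt_lim (fun t => F2 t / F1 t) x
       (2 * p x + 1 / 2 * (F2 x / F1 x) ^ 2))
  (HF0 : F 0 = 0) (HF10 : F1 0 = 1) (HF20 : F2 0 = 0)
  (n : nat)
  (phi phi1 phi2 phi3 : nat -> R -> R)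
  (Hphi1 : forall i x, (i < n)%nat -> I1 x -> derivable_pt_lim (phi i) x (phi1 i x))
  (Hphi2 : forall i x, (i < n)%nat -> I1 x -> derivable_pt_lim (phi1 i) x (phi2 i x))
  (Hphi3 : forall i x, (i < n)%nat -> I1 x -> derivable_pt_lim (phi2 i) x (phi3 i x))
  (Hphi3c : forall i x, (i < n)%nat -> I1 x -> continuity_pt (phi3 i) x)
  (Hphi1nz : forall x, I1 x -> vnorm n (fun i => phi1 i x) <> 0)
  (Hphi0 : forall i, (i < n)%nat -> phi i 0 = 0)
  (Hphi10 : vnorm n (fun i => phi1 i 0) = 1)
  (Hphi120 : inner n (fun i => phi1 i 0) (fun i => phi2 i 0) = 0)
  (HS1 : forall x, I1 x ->
     S1 n (fun i => phi1 i x) (fun i => phi2 i x) (fun i => phi3 i x) <= 2 * p x) :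
  forall x, I1 x ->
    vnorm n (fun i => phi i x) / sqrt (vnorm n (fun i => phi1 i x))
    >= Rabs (F x) / sqrt (F1 x).
Proof.
  assert (Hphi1_pos : forall x, I1 x -> 0 < inner n (vat phi1 x) (vat phi1 x))
    by (intros x Hx; apply inner_pos_of_vnorm_neq0, Hphi1nz, Hx).
  assert (Hphi1_0 : inner n (vat phi1 0) (vat phi1 0) = 1)
    by (rewrite <- vnorm_sqr; unfold vat; rewrite Hphi10; ring).
  assert (HF1_pos : forall x, I1 x -> 0 < F1 x).
  { apply pos_of_nonvanishing; [| exact HF1nz | lra].
    intros x Hx; eapply derivable_pt_lim_continuity_pt, HF2, Hx. }
  intros x Hx; apply Rle_ge, (abs_model_le_curve_ratio n phi phi1 phi2 phi3 p F F1 F2); assumption.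
Qed.
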